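(* Let $\mathcal{H}$ be a complex Hilbert space, let $A\in\mathcal{B}(\mathcal{H})$ be a nonzero positive operator, and let $\mathbb{A}=\begin{pmatrix}A&O\\O&A\end{pmatrix}$ acting on $\mathcal{H}\oplus\mathcal{H}$. Let $P,Q,R,S\in\mathcal{B}_A(\mathcal{H})$. Then for every $\lambda\in[0,1]$, $$\omega_{\mathbb{A}}\left[\begin{pmatrix}P&Q\\R&S\end{pmatrix}\right]\leq \frac{1}{2}\left(\|P\|_A+2\omega_A(S)+\sqrt{\|\lambda^2 PP^{\sharp_A}+QQ^{\sharp_A}\|_A}+\sqrt{\|(1-\lambda)^2 PP^{\sharp_A}+R^{\sharp_A}R\|_A}\right).$$
   Context: For a positive operator $A$ on $\mathcal{H}$, $\langle x,y\rangle_A:=\langle Ax,y\rangle$ and $\|x\|_A:=\sqrt{\langle x,x\rangle_A}$. $\mathcal{B}_A(\mathcal{H})$ is the set of $T\in\mathcal{B}(\mathcal{H})$ with $\mathcal{R}(T^*A)\subseteq\mathcal{R}(A)$; for such $T$, $T^{\sharp_A}$ denotes the unique solution $X$ of $AX=T^*A$ with $\mathcal{R}(X)\subseteq\overline{\mathcal{R}(A)}$ (equivalently $T^{\sharp_A}=A^\dagger T^*A$). $\mathcal{B}_{A^{1/2}}(\mathcal{H})$ is the set of $T$ with $\|Tx\|_A\le\lambda\|x\|_A$ for some $\lambda>0$ and all $x$. For $T\in\mathcal{B}_{A^{1/2}}(\mathcal{H})$: $\|T\|_A:=\sup\{\|Tx\|_A:\|x\|_A=1\}$ and $\omega_A(T):=\sup\{|\langle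 Tx,x\rangle_A|:\|x\|_A=1\}$. The same notions with $A$ replaced by the positive operator $\mathbb{A}$ on $\mathcal{H}\oplus\mathcal{H}$ give $\omega_{\mathbb{A}}$, $\|\cdot\|_{\mathbb{A}}$, where $\langle (x_1,x_2),(y_1,y_2)\rangle_{\mathbb{A}}=\langle x_1,y_1\rangle_A+\langle x_2,y_2\rangle_A$. *)

From HB Require Import structures.
From mathcomp Require Import all_boot all_order all_algebra.
From mathcomp Require Import classical_sets reals.
From mathcomp Require Export complex.
Set Implicit Arguments. Unset Strict Implicit. Unset Printing Implicit Defensive.
Import Order.TTheory GRing.Theory Num.Theory.
Local Open Scope ring_scope.
Local Open Scope classical_set_scope.

Section Hilbert.
Variables (F : realType) (V : lmodType F[i]) (ip : V -> V -> F[i]).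

Definition hnorm (x : V) : F := Num.sqrt (complex.Re (ip x x)).

Definition ip_complete : Prop :=
  forall u : nat -> V,
    (forall e : F, 0 < e -> exists N : nat, forall m n : nat,
        (N <= m)%N -> (N <= n)%N -> hnorm (u m - u n) < e) ->
    exists l : V, forall e : F, 0 < e -> exists N : nat, forall n : nat,
        (N <= n)%N -> hnorm (u n - l) < e.

Definition is_hilbert : Prop :=
  [/\ forall (a : F[i]) (x y z : V), ip (a *: x + y) z = a * ip x z + ip y z,
      forall x y : V, ip x y = (ip y x)^*,
      forall x : V, 0 <= ip x x,
      forall x : V, ip x x = 0 -> x = 0
    & ip_complete].

Definition bounded_op (T : V -> V) : Prop :=
  (forall (a : F[i]) (x y : V), T (a *: x + y) = a *: T x + T y) /\
  exists M : F, forall x : V, hnorm (T x) <= M * hnorm x.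

Definition positive_op (A : V -> V) : Prop :=
  bounded_op A /\ forall x : V, 0 <= ip (A x) x.

Definition ipA (A : V -> V) (x y : V) : F[i] := ip (A x) y.
Definition normA (A : V -> V) (x : V) : F := Num.sqrt (complex.Re (ipA A x x)).

(* T \in B_A(H): T \in B(H) and R(T^* A) \subseteq R(A).  The vector
   T^*(A x) is characterised by <z, T^*(A x)> = <T z, A x> for all z, so
   "A y = T^*(A x)" is written as  forall z, <z, A y> = <T z, A x>. *)
Definition in_BA (A T : V -> V) : Prop :=
  bounded_op T /\
  forall x : V, exists y : V, forall z : V, ip z (A y) = ip (T z) (A x).

Definition in_closure_range (A : V -> V) (v : V) : Prop :=
  forall e : F, 0 < e -> exists y : V, hnorm (v - A y) < e.

(* X = T^{#_A}: the (unique) solution of A X = T^* A with R(X) in the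
   closure of R(A).  "A (X x) = T^*(A x)" is written via the defining
   property of the adjoint as above. *)
Definition is_sharpA (A T X : V -> V) : Prop :=
  (forall x z : V, ip z (A (X x)) = ip (T z) (A x)) /\
  (forall x : V, in_closure_range A (X x)).

Definition opnormA (A T : V -> V) : F :=
  sup [set normA A (T x) | x in [set x : V | normA A x = 1]].

Definition omegaA (A T : V -> V) : F :=
  sup [set complex.Re `|ipA A (T x) x| | x in [set x : V | normA A x = 1]].

(* omega_{AA} of the operator matrix [[P, Q], [R, S]] on H (+) H, where
   AA = diag(A, A), so <(x1,x2),(y1,y2)>_AA = <x1,y1>_A + <x2,y2>_A. *)
Definition omegaA2 (A P Q R S : V -> V) : F :=
  sup [set complex.Re `|ipA A (P x.1 + Q x.2) x.1 + ipA A (R x.1 + S x.2) x.2|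
       | x in [set x : V * V | normA A x.1 ^+ 2 + normA A x.2 ^+ 2 = 1]].

End Hilbert.

Definition rC (F : realType) (r : F) : F[i] := Complex r 0.

(* Let T = [[P, Q], [R, S]] and z = (x1, x2) with |x1|_A^2 + |x2|_A^2 = 1, and split
   <T z, z>_AA into its four entries.  The S-entry is at most omega_A(S).  The P-entry is
   bounded both by |P|_A |x1|_A^2 and by |x1|_A |P^# x1|_A, the Q- and R-entries by
   |x2|_A |Q^# x1|_A and |x2|_A |R x1|_A.  Split the P-entry with weights lam and 1 - lam and
   pair each part with one off-diagonal entry through the elementary inequality
     n1^2 + n2^2 = 1, m <= n1 p, m <= M n1^2, p^2 + q^2 <= a n1^2
       ==>  m + n2 q <= (M + sqrt a) / 2,
   whose last hypothesis comes from
     lam^2 |P^# x|_A^2 + |Q^# x|_A^2 = <(lam^2 P P^# + Q Q^#) x, x>_A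
                                     <= |lam^2 P P^# + Q Q^#|_A |x|_A^2
   (and similarly with R^# R).  Polarization does the rest: it makes the positive operator A
   selfadjoint, and it turns finiteness of omega_AA(T) into A-boundedness of P, Q, R and S,
   which is what makes the operator seminorms above finite. *)

From HB Require Import structures.
From mathcomp Require Import all_boot all_order all_algebra.
From mathcomp Require Import boolp classical_sets reals complex.
From mathcomp Require Import ring lra.
Import Order.TTheory GRing.Theory Num.Theory Normc.
Set Implicit Arguments. Unset Strict Implicit. Unset Printing Implicit Defensive.
Local Open Scope ring_scope.
Local Notation Re := complex.Re.
Local Notation Im := complex.Im.

Section ComplexModulus.
Variable F : realType.
Implicit Types (z w : F[i]) (r : F).

Lemma Re_normr z : Re `|z| = normc z.
Proof. by case: z => a b; rewrite normc_def. Qed.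

Lemma normc_ge0 z : 0 <= normc z.
Proof. by case: z => a b; exact: sqrtr_ge0. Qed.

Lemma sqr_normc z : normc z ^+ 2 = Re z ^+ 2 + Im z ^+ 2.
Proof. by case: z => a b; rewrite sqr_sqrtr // addr_ge0 ?sqr_ge0. Qed.

Lemma normc_rC r : normc (rC r) = `|r|.
Proof. by rewrite /= expr0n addr0 sqrtr_sqr. Qed.

Lemma normc_nat n : normc (n%:R : F[i]) = n%:R.
Proof. by rewrite -(rmorph_nat (real_complex F)) [normc _]normc_rC normr_nat. Qed.

Lemma normc_conj z : normc z^* = normc z.
Proof. by case: z => a b /=; rewrite sqrrN. Qed.

Lemma normc_i : normc ('i%C : F[i]) = 1.
Proof. by rewrite /= expr0n expr1n add0r sqrtr1. Qed.

Lemma Re_le_normc z : Re z <= normc z.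
Proof.
have := normc_ge_Re z; rewrite lecE Re_normr => /andP[_].
by apply: le_trans; exact: ler_norm.
Qed.

Lemma ReD z w : Re (z + w) = Re z + Re w. Proof. by case: z; case: w. Qed.
Lemma ReN z : Re (- z) = - Re z. Proof. by case: z. Qed.
Lemma ReJ z : Re z^* = Re z. Proof. by case: z. Qed.
Lemma Re_rCM r z : Re (rC r * z) = r * Re z. Proof. by case: z => a b /=; ring. Qed.

Lemma mul_conj z : z * z^* = rC (normc z ^+ 2).
Proof.
rewrite sqr_normc; case: z => a b; apply/eqP; rewrite eq_complex /=.
by apply/andP; split; apply/eqP; ring.
Qed.

Lemma iM : ('i%C : F[i]) * 'i%C = -1. Proof. by rewrite -expr2 sqr_i. Qed.

Lemma conj_i : ('i%C : F[i])^* = - 'i%C.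
Proof. by apply/eqP; rewrite eq_complex /= oppr0 !eqxx. Qed.

Lemma conjNi : (- 'i%C : F[i])^* = 'i%C.
Proof. by apply/eqP; rewrite eq_complex /= !oppr0 ?opprK !eqxx. Qed.

Lemma normc_sum_le (I : Type) (s : seq I) (g : I -> F[i]) :
  normc (\sum_(i <- s) g i) <= \sum_(i <- s) normc (g i).
Proof.
elim: s => [|i s IH]; first by rewrite !big_nil normc0.
by rewrite !big_cons; apply: le_trans (le_normcD _ _) _; exact: lerD.
Qed.

Lemma Re_sum (I : Type) (s : seq I) (g : I -> F[i]) :
  Re (\sum_(i <- s) g i) = \sum_(i <- s) Re (g i).
Proof. by elim: s => [|i s IH]; rewrite ?big_nil // !big_cons ReD IH. Qed.

End ComplexModulus.

Section SesquilinearForms.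
Variables (F : realType) (W : lmodType F[i]).
Implicit Types (x y z : W) (a c : F[i]).

Definition sesquilinear (d : W -> W -> F[i]) :=
  (forall a x y z, d (a *: x + y) z = a * d x z + d y z) /\
  (forall a x y z, d z (a *: x + y) = a^* * d z x + d z y).

Definition sesq_norm (d : W -> W -> F[i]) z := Num.sqrt (Re (d z z)).

Definition unit_roots4 : seq F[i] := [:: 1; -1; 'i%C; - 'i%C].

Lemma sesquilinearB (d e : W -> W -> F[i]) :
  sesquilinear d -> sesquilinear e -> sesquilinear (fun x y => d x y - e x y).
Proof. by move=> [d1 d2] [e1 e2]; split=> a x y z; rewrite ?d1 ?e1 ?d2 ?e2; ring. Qed.

Section Form.
Variable d : W -> W -> F[i].
Hypothesis d_sesq : sesquilinear d.

Lemma sesq0l z : d 0 z = 0.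
Proof.
have := d_sesq.1 1 0 0 z; rewrite scaler0 addr0 mul1r => h.
by apply: (addrI (d 0 z)); rewrite addr0 -h.
Qed.

Lemma sesq0r z : d z 0 = 0.
Proof.
have := d_sesq.2 1 0 0 z; rewrite scaler0 addr0 conjC1 mul1r => h.
by apply: (addrI (d z 0)); rewrite addr0 -h.
Qed.

Lemma sesqDl x y z : d (x + y) z = d x z + d y z.
Proof. by rewrite -[x in LHS]scale1r d_sesq.1 mul1r. Qed.

Lemma sesqZl a x z : d (a *: x) z = a * d x z.
Proof. by rewrite -[a *: x]addr0 d_sesq.1 sesq0l addr0. Qed.

Lemma sesqDr x y z : d z (x + y) = d z x + d z y.
Proof. by rewrite -[x in LHS]scale1r d_sesq.2 conjC1 mul1r. Qed.

Lemma sesqZr a x z : d z (a *: x) = a^* * d z x.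
Proof. by rewrite -[a *: x]addr0 d_sesq.2 sesq0r addr0. Qed.

Lemma sesqNr x z : d z (- x) = - d z x.
Proof. by rewrite -scaleN1r sesqZr conjCN1 mulN1r. Qed.

Lemma sesq_expand x y c : d (x + c *: y) (x + c *: y) =
  d x x + c^* * d x y + c * d y x + c * c^* * d y y.
Proof. rewrite !sesqDl !sesqDr !sesqZl !sesqZr; ring. Qed.

Lemma sesq_polarization x y :
  4%:R * d x y = \sum_(c <- unit_roots4) c * d (x + c *: y) (x + c *: y).
Proof.
rewrite !big_cons big_nil !sesq_expand conjCN1 conjNi conj_i conjC1.
transitivity (4%:R * d x y + (1 + 'i%C * 'i%C) * (2%:R * d y x - 2%:R * d x y)).
  by rewrite iM subrr mul0r addr0.
ring.
Qed.

Lemma sesq_eq0 : (forall z, d z z = 0) -> forall x y, d x y = 0.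
Proof.
move=> d_diag0 x y; have four_neq0 : (4%:R : F[i]) != 0 by rewrite pnatr_eq0.
apply: (mulfI four_neq0).
by rewrite mulr0 sesq_polarization !big_cons big_nil !d_diag0 !mulr0 !addr0.
Qed.

Lemma normc_sesqZ c x y : normc (d (c *: x) (c *: y)) = normc c ^+ 2 * normc (d x y).
Proof. by rewrite sesqZl sesqZr !normcM normc_conj mulrA -expr2. Qed.

Lemma sesq_normZ c z : sesq_norm d (c *: z) = normc c * sesq_norm d z.
Proof.
rewrite /sesq_norm sesqZl sesqZr mulrA mul_conj Re_rCM sqrtrM ?sqr_ge0 //.
by rewrite sqrtr_sqr ger0_norm ?normc_ge0.
Qed.

Lemma le_homogeneous_sphere (f : W -> F) (k : nat) (M : F) : (0 < k)%N ->
    (forall r z, 0 < r -> f (rC r *: z) = r ^+ k * f z) ->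
    (forall z, sesq_norm d z = 0 -> f z <= 0) ->
    (forall z, sesq_norm d z = 1 -> f z <= M) ->
  forall z, f z <= M * sesq_norm d z ^+ k.
Proof.
move=> k_gt0 f_hom f_null f_sphere z.
have [Nz0|Nz_neq0] := eqVneq (sesq_norm d z) 0.
  by rewrite Nz0 expr0n (gtn_eqF k_gt0) mulr0 f_null.
have Nz_gt0 : 0 < sesq_norm d z by rewrite lt_def Nz_neq0 sqrtr_ge0.
set r := (sesq_norm d z)^-1.
have r_gt0 : 0 < r by rewrite invr_gt0.
have : f (rC r *: z) <= M.
  by apply: f_sphere; rewrite sesq_normZ normc_rC gtr0_norm // mulVf.
rewrite f_hom // => fz_le.
have -> : f z = sesq_norm d z ^+ k * (r ^+ k * f z).
  by rewrite mulrA -exprMn mulfV // expr1n mul1r.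
by rewrite mulrC ler_wpM2r // exprn_ge0 // ltW.
Qed.
End Form.

Lemma sesq_polarization_le (d e : W -> W -> F[i]) (w : F) :
    sesquilinear d -> sesquilinear e ->
    (forall z, normc (d z z) <= w * Re (e z z)) ->
  forall x y, normc (d x y) <= w * (Re (e x x) + Re (e y y)).
Proof.
move=> d_sesq e_sesq d_le x y.
have e_sum : \sum_(c <- unit_roots4) e (x + c *: y) (x + c *: y) = 4%:R * (e x x + e y y).
  rewrite !big_cons big_nil !(sesq_expand e_sesq) conjCN1 conjNi conj_i conjC1.
  transitivity (4%:R * (e x x + e y y) - (1 + 'i%C * 'i%C) * (2%:R * e y y)); first by ring.
  by rewrite iM subrr mul0r subr0.
have four_gt0 : 0 < 4%:R :> F by [].
rewrite -(ler_pM2l four_gt0).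
have -> : 4%:R * normc (d x y) = normc (4%:R * d x y) by rewrite normcM normc_nat.
rewrite (sesq_polarization d_sesq).
apply: le_trans (normc_sum_le _ _) _.
have -> : 4%:R * (w * (Re (e x x) + Re (e y y))) =
    \sum_(c <- unit_roots4) w * Re (e (x + c *: y) (x + c *: y)).
  rewrite -mulr_sumr -Re_sum e_sum -(rmorph_nat (real_complex F)) [Re (_ * _)]Re_rCM ReD.
  by rewrite mulrCA.
rewrite !big_cons !big_nil !normcM normcN normc1 normcN normc_i !mul1r.
by do 4 (apply: lerD; first exact: d_le).
Qed.
End SesquilinearForms.

Lemma le_mul_of_quadratic_ge0 (F : realFieldType) (p q k : F) :
    0 <= p -> 0 <= q -> 0 <= k ->
    (forall t, 0 <= t -> 0 <= p - 2%:R * t * k + t ^+ 2 * k * q) ->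
  k <= p * q.
Proof.
move=> p_ge0 q_ge0 k_ge0 quad_ge0.
have [q_gt0|] := ltrP 0 q.
  have := quad_ge0 q^-1; rewrite invr_ge0 q_ge0 => /(_ isT).
  have -> : p - 2%:R * q^-1 * k + q^-1 ^+ 2 * k * q = (p * q - k) / q.
    by field; rewrite gt_eqF.
  by rewrite pmulr_lge0 ?invr_gt0 // subr_ge0.
move=> q_le0; have q0 : q = 0 by apply: le_anti; rewrite q_le0.
have [k_gt0|k_le0] := ltrP 0 k; last by rewrite q0 mulr0.
have t_ge0 : 0 <= (p + 1) / (2%:R * k) by apply: divr_ge0; [lra | rewrite mulr_ge0 // ltW].
have := quad_ge0 _ t_ge0; rewrite q0 mulr0 addr0.
have -> : p - 2%:R * ((p + 1) / (2%:R * k)) * k = -1 by field; rewrite gt_eqF.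
by rewrite ler0N1.
Qed.

Lemma le_twice_mul_of_quadratic (F : realFieldType) (q m w : F) :
    0 <= q -> 0 <= m -> 0 <= w ->
    (forall t, 0 <= t -> t * q ^+ 2 <= w * (m ^+ 2 + t ^+ 2 * q ^+ 2)) ->
  q <= 2%:R * w * m.
Proof.
move=> q_ge0 m_ge0 w_ge0 quad_le.
have [q_gt0|q_le0] := ltrP 0 q; last first.
  by apply: le_trans q_le0 _; rewrite !mulr_ge0.
have [m_gt0|m_le0] := ltrP 0 m.
  have := quad_le (m / q) (divr_ge0 m_ge0 q_ge0).
  have -> : m / q * q ^+ 2 = m * q by field; rewrite gt_eqF.
  have -> : (m / q) ^+ 2 * q ^+ 2 = m ^+ 2 by field; rewrite gt_eqF.
  by nra.
have m0 : m = 0 by apply: le_anti; rewrite m_le0.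
have t_gt0 : 0 < (w + 1)^-1 by rewrite invr_gt0 ltr_wpDl.
have t_w : (w + 1)^-1 * (w + 1) = 1 by rewrite mulVf // gt_eqF // ltr_wpDl.
have := quad_le _ (ltW t_gt0); rewrite m0 expr0n /= add0r.
have : 0 < q ^+ 2 * (w + 1)^-1 ^+ 2 by rewrite mulr_gt0 // exprn_gt0.
by nra.
Qed.

Lemma sphere_mixed_le (F : rcfType) (m p q n1 n2 M a : F) :
    0 <= m -> 0 <= M -> n1 ^+ 2 + n2 ^+ 2 = 1 ->
    m <= n1 * p -> m <= M * n1 ^+ 2 -> p ^+ 2 + q ^+ 2 <= a * n1 ^+ 2 ->
  m + n2 * q <= 2^-1 * (M + Num.sqrt a).
Proof.
move=> m_ge0 M_ge0 sphere m_le_p m_le_M pq_le.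
have half_ge0 : 0 <= 2^-1 * (M + Num.sqrt a).
  by rewrite mulr_ge0 ?invr_ge0 ?addr_ge0 ?sqrtr_ge0.
have [n1_0|n1_neq0] := eqVneq n1 0.
  rewrite n1_0 expr0n /= mulr0 mul0r in pq_le m_le_p.
  have -> : q = 0 by apply/eqP; rewrite -sqrf_eq0 eq_le sqr_ge0 andbT; nra.
  by rewrite mulr0 addr0 (le_trans m_le_p).
have n1sq_gt0 : 0 < n1 ^+ 2 by rewrite lt_def sqrf_eq0 n1_neq0 sqr_ge0.
have a_ge0 : 0 <= a by rewrite -(pmulr_lge0 _ n1sq_gt0); apply: le_trans pq_le; nra.
set s := Num.sqrt a; have s_ge0 : 0 <= s := sqrtr_ge0 a.
have s_sqr : s ^+ 2 = a by rewrite sqr_sqrtr.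
(* With n1 = cos θ and n2 = sin θ, c and d are cos 2θ and sin 2θ. *)
set c := n1 ^+ 2 - n2 ^+ 2; set d := 2%:R * n1 * n2.
have cd_sphere : c ^+ 2 + d ^+ 2 = 1.
  by rewrite -(expr1n _ 2) -sphere /c /d; ring.
have mq_le : m * c + n1 * q * d <= n1 ^+ 2 * s.
  have cauchy_schwarz : (m * c + n1 * q * d) ^+ 2 <= m ^+ 2 + (n1 * q) ^+ 2.
    rewrite -subr_ge0 -[X in X - _]mulr1 -cd_sphere.
    have -> : (m ^+ 2 + (n1 * q) ^+ 2) * (c ^+ 2 + d ^+ 2) - (m * c + n1 * q * d) ^+ 2
              = (m * d - n1 * q * c) ^+ 2 by ring.
    exact: sqr_ge0.
  have : m ^+ 2 <= (n1 * p) ^+ 2 by rewrite ler_sqr ?nnegrE // (le_trans m_ge0).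
  have : 0 <= n1 ^+ 2 * s by rewrite mulr_ge0 ?sqr_ge0.
  move: pq_le; rewrite -s_sqr !exprMn; nra.
have : 2%:R * (m + n2 * q) * n1 ^+ 2 <= (M + s) * n1 ^+ 2.
  have -> : 2%:R * (m + n2 * q) * n1 ^+ 2 = m * (n1 ^+ 2 + n2 ^+ 2) + (m * c + n1 * q * d).
    by rewrite /c /d; ring.
  rewrite sphere mulr1 mulrDl; lra.
by rewrite ler_pM2r //; lra.
Qed.

Lemma sphere_mixed_le_weighted (F : rcfType) (t m p q n1 n2 M a : F) :
    0 <= t -> 0 <= m -> 0 <= M -> n1 ^+ 2 + n2 ^+ 2 = 1 ->
    m <= n1 * p -> m <= M * n1 ^+ 2 -> t ^+ 2 * p ^+ 2 + q ^+ 2 <= a * n1 ^+ 2 ->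
  t * m + n2 * q <= 2^-1 * (t * M + Num.sqrt a).
Proof.
move=> t_ge0 m_ge0 M_ge0 sphere m_le_p m_le_M pq_le.
apply: (sphere_mixed_le (p := t * p)) sphere _ _ _; rewrite ?mulr_ge0 //.
- by rewrite mulrCA ler_wpM2l.
- by rewrite -mulrA ler_wpM2l.
- by rewrite exprMn.
Qed.

Lemma le_sup_image (F : realType) (T : Type) (D : set T) (f : T -> F) (k : F) x :
  (forall y, D y -> f y <= k) -> D x -> f x <= sup [set f y | y in D].
Proof.
move=> f_le Dx; apply: ub_le_sup; last by exists x.
by exists k => _ [y Dy <-]; exact: f_le.
Qed.

Lemma sup_image_ge0 (F : realType) (T : Type) (D : set T) (f : T -> F) :
  (forall y, D y -> 0 <= f y) -> 0 <= sup [set f y | y in D].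
Proof.
move=> f_ge0; have [[[_ [x Dx _]] f_ub]|] := pselect (has_sup [set f y | y in D]).
  by apply: le_trans (f_ge0 _ Dx) (ub_le_sup f_ub _); exists x.
by move/sup_out ->.
Qed.

Section LinearOperators.
Variables (F : realType) (V : lmodType F[i]) (T : V -> V).
Hypothesis T_lin : linear T.

Definition linear_of : {linear V -> V} := HB.pack T (GRing.isLinear.Build _ _ _ _ T T_lin).

Lemma linear_op0 : T 0 = 0. Proof. exact: (linear0 linear_of). Qed.
Lemma linear_opZ c x : T (c *: x) = c *: T x. Proof. exact: (linearZZ linear_of). Qed.
End LinearOperators.

Section SemiInnerProduct.
Variables (F : realType) (V : lmodType F[i]) (ip : V -> V -> F[i]) (A : V -> V).
Hypothesis ip_linear : forall a x y z, ip (a *: x + y) z = a * ip x z + ip y z.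
Hypothesis ip_conj : forall x y, ip x y = (ip y x)^*.
Hypothesis ip_definite : forall x, ip x x = 0 -> x = 0.
Hypothesis A_lin : linear A.
Hypothesis A_pos : forall x, 0 <= ip (A x) x.

Local Notation hA := (ipA ip A).
Local Notation nA := (normA ip A).
Implicit Types (x y z : V) (a c : F[i]).

Lemma ip_sesq : sesquilinear ip.
Proof.
split=> // a x y z; rewrite ip_conj ip_linear rmorphD rmorphM.
by rewrite [ip z x]ip_conj [ip z y]ip_conj.
Qed.

Lemma ipA_sesq : sesquilinear hA.
Proof. by split=> a x y z; rewrite /ipA ?A_lin ?ip_linear // ip_sesq.2. Qed.

Lemma A_selfadjoint x y : ip (A x) y = ip x (A y).
Proof.
apply/eqP; rewrite -subr_eq0; apply/eqP; move: x y.
apply: (sesq_eq0 (d := fun x y => ip (A x) y - ip x (A y))) => [|z].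
  apply: sesquilinearB; first exact: ipA_sesq.
  by split=> a x y z; rewrite ?A_lin ?ip_linear // ip_sesq.2.
by rewrite [ip z (A z)]ip_conj geC0_conj ?subrr.
Qed.

Lemma ipA_conj x y : hA y x = (hA x y)^*.
Proof. by rewrite /ipA ip_conj A_selfadjoint. Qed.

Lemma sesq_norm_ipA x : sesq_norm hA x = nA x. Proof. by []. Qed.

Lemma normA_ge0 x : 0 <= nA x. Proof. exact: sqrtr_ge0. Qed.

Lemma normA_sqr x : nA x ^+ 2 = Re (hA x x).
Proof. by rewrite sqr_sqrtr //; have := A_pos x; rewrite lecE => /andP[]. Qed.

Lemma normAZ c x : nA (c *: x) = normc c * nA x.
Proof. exact: (sesq_normZ ipA_sesq). Qed.

Lemma sqr_normA_addZ x y c :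
  nA (x + c *: y) ^+ 2 = nA x ^+ 2 + 2%:R * Re (c * hA y x) + normc c ^+ 2 * nA y ^+ 2.
Proof.
have conj_swap : Re (c^* * hA x y) = Re (c * hA y x).
  by rewrite ipA_conj -[in RHS]ReJ rmorphM.
rewrite !normA_sqr (sesq_expand ipA_sesq) mul_conj !ReD Re_rCM conj_swap; ring.
Qed.

Lemma ipA_diag x : hA x x = rC (nA x ^+ 2).
Proof.
rewrite normA_sqr /ipA; have := A_pos x.
by case: (ip (A x) x) => a b; rewrite lecE /= => /andP[/eqP ->].
Qed.

Lemma normA_CS x y : normc (hA x y) <= nA x * nA y.
Proof.
set N := normc (hA x y) ^+ 2.
have quad_ge0 t : 0 <= t -> 0 <= nA x ^+ 2 - 2%:R * t * N + t ^+ 2 * N * nA y ^+ 2.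
  move=> t_ge0; have := sqr_ge0 (nA (x + (- (rC t * hA x y)) *: y)).
  rewrite sqr_normA_addZ [hA y x]ipA_conj mulNr -[rC t * _ * _]mulrA mul_conj ReN Re_rCM /=.
  by rewrite normcN normcM normc_rC ger0_norm // exprMn -/N; lra.
have := le_mul_of_quadratic_ge0 (sqr_ge0 (nA x)) (sqr_ge0 (nA y)) (sqr_ge0 _) quad_ge0.
by rewrite -exprMn ler_sqr ?nnegrE ?mulr_ge0 ?normc_ge0 ?normA_ge0.
Qed.

Lemma ler_normAD x y : nA (x + y) <= nA x + nA y.
Proof.
rewrite -ler_sqr ?nnegrE ?addr_ge0 ?normA_ge0 //.
have := sqr_normA_addZ x y 1; rewrite scale1r mul1r normc1 expr1n mul1r => ->.
have := Re_le_normc (hA y x); have := normA_CS y x; rewrite sqrrD mulr2n; lra.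
Qed.

Lemma normA_eqA u v : A u = A v -> nA u = nA v.
Proof.
move=> Auv; rewrite /normA /ipA.
by have -> : ip (A u) u = ip (A v) v by rewrite A_selfadjoint Auv -A_selfadjoint Auv.
Qed.

Definition A_bounded (T : V -> V) (k : F) := forall x, nA (T x) <= k * nA x.

Lemma A_bounded_comp T U k l :
  0 <= k -> A_bounded T k -> A_bounded U l -> A_bounded (T \o U) (k * l).
Proof.
move=> k_ge0 T_bdd U_bdd x; rewrite -mulrA; apply: le_trans (T_bdd _) _.
by rewrite ler_wpM2l.
Qed.

Lemma A_bounded_of_ipA_le T w : 0 <= w ->
    (forall x y, normc (hA (T x) y) <= w * (nA x ^+ 2 + nA y ^+ 2)) ->
  A_bounded T (2%:R * w).
Proof.
move=> w_ge0 T_le x; apply: le_twice_mul_of_quadratic; rewrite ?normA_ge0 // => t t_ge0.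
have := T_le x (rC t *: T x).
rewrite (sesqZr ipA_sesq) normcM normc_conj normc_rC ger0_norm // ipA_diag normc_rC.
by rewrite ger0_norm ?sqr_ge0 // normAZ normc_rC ger0_norm // exprMn.
Qed.

Section Sharp.
Variables T X : V -> V.
Hypothesis X_adj : forall x z, ip z (A (X x)) = ip (T z) (A x).

Lemma ipA_sharp x z : hA z (X x) = hA (T z) x.
Proof. by rewrite /ipA A_selfadjoint X_adj -A_selfadjoint. Qed.

Lemma Re_ipA_sharpl y : Re (hA (T (X y)) y) = nA (X y) ^+ 2.
Proof. by rewrite -ipA_sharp normA_sqr. Qed.

Lemma Re_ipA_sharpr y : Re (hA (X (T y)) y) = nA (T y) ^+ 2.
Proof. by rewrite ipA_conj ReJ ipA_sharp normA_sqr. Qed.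

(* X need not be linear: definiteness of ip still gives A (X (c x)) = c A (X x). *)
Lemma normA_sharpZ c x : nA (X (c *: x)) = normc c * nA (X x).
Proof.
rewrite -normAZ; apply: normA_eqA; apply/eqP; rewrite -subr_eq0; apply/eqP/ip_definite.
set u := A (X (c *: x)) - A (c *: X x).
rewrite {2}/u (sesqDr ip_sesq) (sesqNr ip_sesq) X_adj !(linear_opZ A_lin).
by rewrite !(sesqZr ip_sesq) X_adj subrr.
Qed.

Lemma A_bounded_sharp k : 0 <= k -> A_bounded T k -> A_bounded X k.
Proof.
move=> k_ge0 T_bdd y.
have sqr_le : nA (X y) ^+ 2 <= k * nA (X y) * nA y.
  rewrite -Re_ipA_sharpl; apply: le_trans (Re_le_normc _) _.
  by apply: le_trans (normA_CS _ _) _; rewrite ler_wpM2r ?normA_ge0.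
have [Xy_gt0|] := ltrP 0 (nA (X y)); last first.
  by move=> /le_trans; apply; rewrite mulr_ge0 ?normA_ge0.
by move: sqr_le; rewrite mulrAC expr2 ler_pM2r.
Qed.

End Sharp.

Lemma normA_le_opnormA T k : linear T -> A_bounded T k ->
  forall y, nA (T y) <= opnormA ip A T * nA y.
Proof.
move=> T_lin T_bdd y; rewrite -[nA y]expr1.
apply: (le_homogeneous_sphere ipA_sesq (f := fun y => nA (T y))) => //
  [r z r_gt0|z|z]; rewrite ?sesq_norm_ipA.
- by rewrite linear_opZ // normAZ normc_rC gtr0_norm // expr1.
- by move=> z0; apply: le_trans (T_bdd z) _; rewrite z0 mulr0.
- move=> z1; rewrite /opnormA.
  apply: (le_sup_image (f := fun x => nA (T x)) (k := k)) => // u /= u1.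
  by apply: le_trans (T_bdd u) _; rewrite u1 mulr1.
Qed.

Lemma ipA_le_omegaA T k : linear T -> A_bounded T k ->
  forall y, normc (hA (T y) y) <= omegaA ip A T * nA y ^+ 2.
Proof.
move=> T_lin T_bdd y.
have CS_bound z : normc (hA (T z) z) <= k * nA z * nA z.
  by apply: le_trans (normA_CS _ _) _; rewrite ler_wpM2r ?normA_ge0.
apply: (le_homogeneous_sphere ipA_sesq (f := fun y => normc (hA (T y) y))) => //
  [r z r_gt0|z|z]; rewrite ?sesq_norm_ipA.
- by rewrite linear_opZ // (normc_sesqZ ipA_sesq) normc_rC gtr0_norm.
- by move=> z0; apply: le_trans (CS_bound z) _; rewrite z0 mulr0.
- move=> z1; rewrite -Re_normr /omegaA.
  apply: (le_sup_image (f := fun x => Re `|hA (T x) x|) (k := k)) => // u u1.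
  by rewrite Re_normr; apply: le_trans (CS_bound u) _; rewrite (u1 : nA u = 1) !mulr1.
Qed.

Lemma quadratic_form_le_opnormA (G1 G2 H1 H2 : V -> V) (t k K : F) : 0 <= t ->
    (forall y, Re (hA (G1 y) y) = nA (H1 y) ^+ 2) ->
    (forall y, Re (hA (G2 y) y) = nA (H2 y) ^+ 2) ->
    (forall c y, nA (H1 (c *: y)) = normc c * nA (H1 y)) ->
    (forall c y, nA (H2 (c *: y)) = normc c * nA (H2 y)) ->
    A_bounded H1 k -> A_bounded H2 k -> A_bounded G1 K -> A_bounded G2 K ->
  forall y, t * nA (H1 y) ^+ 2 + nA (H2 y) ^+ 2
            <= opnormA ip A (fun x => rC t *: G1 x + G2 x) * nA y ^+ 2.
Proof.
move=> t_ge0 G1E G2E H1Z H2Z H1_bdd H2_bdd G1_bdd G2_bdd.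
have H_null H y : A_bounded H k -> nA y = 0 -> nA (H y) = 0.
  by move=> H_bdd y0; apply: le_anti; rewrite normA_ge0 andbT -(mulr0 k) -y0 H_bdd.
have G_sphere G v : A_bounded G K -> nA v = 1 -> nA (G v) <= K.
  by move=> G_bdd v1; rewrite -[K]mulr1 -v1 G_bdd.
apply: (le_homogeneous_sphere ipA_sesq) => // [r z r_gt0|z|u]; rewrite ?sesq_norm_ipA.
- by rewrite H1Z H2Z normc_rC gtr0_norm // !exprMn; ring.
- by move=> z0; rewrite !H_null // expr0n mulr0 addr0.
move=> u1; rewrite -G1E -G2E -Re_rCM -ReD -(sesqZl ipA_sesq) -(sesqDl ipA_sesq).
apply: le_trans (Re_le_normc _) _; apply: le_trans (normA_CS _ _) _.
rewrite u1 mulr1 /opnormA.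
apply: (le_sup_image (f := fun x => nA (rC t *: G1 x + G2 x)) (k := t * K + K)) => // v /= v1.
apply: le_trans (ler_normAD _ _) _; rewrite normAZ normc_rC ger0_norm //.
apply: lerD; last exact: G_sphere G2_bdd v1.
by apply: ler_wpM2l => //; exact: G_sphere G1_bdd v1.
Qed.

Lemma opnormA_ge0 T : 0 <= opnormA ip A T.
Proof. by apply: sup_image_ge0 => x _; exact: normA_ge0. Qed.

Lemma omegaA_ge0 T : 0 <= omegaA ip A T.
Proof. by apply: sup_image_ge0 => x _; rewrite Re_normr normc_ge0. Qed.

Section BlockOperator.
Variables P Q R S : V -> V.
Hypotheses (P_lin : linear P) (Q_lin : linear Q) (R_lin : linear R) (S_lin : linear S).

Definition block_ipA (z z' : V * V) := hA (P z.1 + Q z.2) z'.1 + hA (R z.1 + S z.2) z'.2.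
Definition ipA2 (z z' : V * V) := hA z.1 z'.1 + hA z.2 z'.2.

Lemma block_ipA_sesq : sesquilinear block_ipA.
Proof.
split=> a x y z; rewrite /block_ipA /=.
  by rewrite P_lin Q_lin R_lin S_lin !(sesqDl ipA_sesq) !(sesqZl ipA_sesq); ring.
by rewrite !(sesqDr ipA_sesq) !(sesqZr ipA_sesq); ring.
Qed.

Lemma ipA2_sesq : sesquilinear ipA2.
Proof.
split=> a x y z; rewrite /ipA2 /=.
  by rewrite !(sesqDl ipA_sesq) !(sesqZl ipA_sesq); ring.
by rewrite !(sesqDr ipA_sesq) !(sesqZr ipA_sesq); ring.
Qed.

Lemma Re_ipA2 (u : V * V) : Re (ipA2 u u) = nA u.1 ^+ 2 + nA u.2 ^+ 2.
Proof. by rewrite ReD !normA_sqr. Qed.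

Variable w : F.
Hypothesis block_sphere_le :
  forall u : V * V, nA u.1 ^+ 2 + nA u.2 ^+ 2 = 1 -> normc (block_ipA u u) <= w.

Lemma block_ipA_diag_le (u : V * V) : normc (block_ipA u u) <= w * Re (ipA2 u u).
Proof.
have N_sqr v : sesq_norm ipA2 v ^+ 2 = Re (ipA2 v v).
  by rewrite sqr_sqrtr // Re_ipA2 addr_ge0 ?sqr_ge0.
rewrite -N_sqr.
apply: (le_homogeneous_sphere ipA2_sesq (f := fun u => normc (block_ipA u u))) => //
  [r v r_gt0|v N0|v N1].
- by rewrite (normc_sesqZ block_ipA_sesq) normc_rC gtr0_norm.
- have := N_sqr v; rewrite N0 expr0n Re_ipA2 /= => sum0.
  have [n1 n2] : nA v.1 = 0 /\ nA v.2 = 0.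
    by split; apply/eqP; rewrite -sqrf_eq0 eq_le sqr_ge0 andbT;
      move: (sqr_ge0 (nA v.1)) (sqr_ge0 (nA v.2)); lra.
  rewrite /block_ipA; apply: le_trans (le_normcD _ _) _; rewrite -[0]addr0.
  by apply: lerD; apply: le_trans (normA_CS _ _) _; rewrite ?n1 ?n2 mulr0.
- by apply: block_sphere_le; rewrite -Re_ipA2 -N_sqr N1 expr1n.
Qed.

Lemma block_entries_ipA_le x y :
  [/\ normc (hA (P x) y) <= w * (nA x ^+ 2 + nA y ^+ 2),
      normc (hA (Q x) y) <= w * (nA x ^+ 2 + nA y ^+ 2),
      normc (hA (R x) y) <= w * (nA x ^+ 2 + nA y ^+ 2)
    & normc (hA (S x) y) <= w * (nA x ^+ 2 + nA y ^+ 2)].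
Proof.
have polar := sesq_polarization_le block_ipA_sesq ipA2_sesq block_ipA_diag_le.
have nA0 : nA 0 = 0 by rewrite /normA (sesq0l ipA_sesq) /= sqrtr0.
have Re_ipA2l v : Re (ipA2 (v, 0) (v, 0)) = nA v ^+ 2 by rewrite Re_ipA2 /= nA0 expr0n addr0.
have Re_ipA2r v : Re (ipA2 (0, v) (0, v)) = nA v ^+ 2 by rewrite Re_ipA2 /= nA0 expr0n add0r.
rewrite /block_ipA in polar.
by split; [move: (polar (x, 0) (y, 0)) | move: (polar (0, x) (y, 0))
       | move: (polar (x, 0) (0, y)) | move: (polar (0, x) (0, y))];
  rewrite ?Re_ipA2l ?Re_ipA2r /= ?(linear_op0 P_lin, linear_op0 Q_lin, linear_op0 R_lin,
    linear_op0 S_lin) ?(sesq0r ipA_sesq) ?add0r ?addr0.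
Qed.

Lemma block_entries_A_bounded : 0 <= w ->
  [/\ A_bounded P (2%:R * w), A_bounded Q (2%:R * w),
      A_bounded R (2%:R * w) & A_bounded S (2%:R * w)].
Proof.
by move=> w_ge0; split; apply: A_bounded_of_ipA_le => // x y; case: (block_entries_ipA_le x y).
Qed.

End BlockOperator.

Section NumericalRadiusBound.
Variables P Q R S Ps Qs Rs : V -> V.
Hypotheses (P_lin : linear P) (R_lin : linear R) (S_lin : linear S).
Variable k : F.
Hypotheses (k_ge0 : 0 <= k) (P_bdd : A_bounded P k) (Q_bdd : A_bounded Q k)
  (R_bdd : A_bounded R k) (S_bdd : A_bounded S k).
Hypothesis Ps_adj : forall x z, ip z (A (Ps x)) = ip (P z) (A x).
Hypothesis Qs_adj : forall x z, ip z (A (Qs x)) = ip (Q z) (A x).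
Hypothesis Rs_adj : forall x z, ip z (A (Rs x)) = ip (R z) (A x).
Variable lam : F.
Hypotheses (lam_ge0 : 0 <= lam) (lam_le1 : lam <= 1).

Lemma block_ipA_sphere_le (u : V * V) : nA u.1 ^+ 2 + nA u.2 ^+ 2 = 1 ->
  normc (block_ipA P Q R S u u) <=
    2^-1 * (opnormA ip A P + 2 * omegaA ip A S
      + Num.sqrt (opnormA ip A (fun x => rC (lam ^+ 2) *: P (Ps x) + Q (Qs x)))
      + Num.sqrt (opnormA ip A (fun x => rC ((1 - lam) ^+ 2) *: P (Ps x) + Rs (R x)))).
Proof.
case: u => x1 x2 /= sphere.
have Ps_bdd := A_bounded_sharp Ps_adj k_ge0 P_bdd.
have Qs_bdd := A_bounded_sharp Qs_adj k_ge0 Q_bdd.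
have Rs_bdd := A_bounded_sharp Rs_adj k_ge0 R_bdd.
set mP := normc (hA (P x1) x1).
have mP_le_sharp : mP <= nA x1 * nA (Ps x1).
  by rewrite /mP -(ipA_sharp Ps_adj); exact: normA_CS.
have mP_le_opnormA : mP <= opnormA ip A P * nA x1 ^+ 2.
  apply: le_trans (normA_CS _ _) _; rewrite expr2 mulrA ler_wpM2r ?normA_ge0 //.
  exact: normA_le_opnormA P_lin P_bdd x1.
have Q_le : normc (hA (Q x2) x1) <= nA x2 * nA (Qs x1).
  by rewrite -(ipA_sharp Qs_adj); exact: normA_CS.
have R_le : normc (hA (R x1) x2) <= nA x2 * nA (R x1) by rewrite mulrC; exact: normA_CS.
have S_le : normc (hA (S x2) x2) <= omegaA ip A S.
  apply: le_trans (ipA_le_omegaA S_lin S_bdd x2) _.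
  rewrite -[X in _ <= X]mulr1 ler_wpM2l ?omegaA_ge0 //; have := sqr_ge0 (nA x1); lra.
have RZ c y : nA (R (c *: y)) = normc c * nA (R y) by rewrite linear_opZ // normAZ.
have a_le := quadratic_form_le_opnormA (sqr_ge0 lam)
  (Re_ipA_sharpl Ps_adj) (Re_ipA_sharpl Qs_adj) (normA_sharpZ Ps_adj) (normA_sharpZ Qs_adj)
  Ps_bdd Qs_bdd (A_bounded_comp k_ge0 P_bdd Ps_bdd) (A_bounded_comp k_ge0 Q_bdd Qs_bdd) x1.
have b_le := quadratic_form_le_opnormA (sqr_ge0 (1 - lam))
  (Re_ipA_sharpl Ps_adj) (Re_ipA_sharpr Rs_adj) (normA_sharpZ Ps_adj) RZ
  Ps_bdd R_bdd (A_bounded_comp k_ge0 P_bdd Ps_bdd) (A_bounded_comp k_ge0 Rs_bdd R_bdd) x1.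
have lam'_ge0 : 0 <= 1 - lam by rewrite subr_ge0.
have mP_ge0 : 0 <= mP := normc_ge0 _.
have lam_part := sphere_mixed_le_weighted lam_ge0 mP_ge0 (opnormA_ge0 P) sphere
  mP_le_sharp mP_le_opnormA a_le.
have lam'_part := sphere_mixed_le_weighted lam'_ge0 mP_ge0 (opnormA_ge0 P) sphere
  mP_le_sharp mP_le_opnormA b_le.
rewrite /block_ipA /= !(sesqDl ipA_sesq).
apply: le_trans (le_normcD _ _) _; apply: le_trans (lerD (le_normcD _ _) (le_normcD _ _)) _.
rewrite -/mP; lra.
Qed.

End NumericalRadiusBound.

End SemiInnerProduct.

Theorem theorem2p4 (F : realType) (V : lmodType F[i]) (ip : V -> V -> F[i])
    (A P Q R S Ps Qs Rs : V -> V) :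
  is_hilbert ip ->
  positive_op ip A -> (exists x : V, A x != 0) ->
  in_BA ip A P -> in_BA ip A Q -> in_BA ip A R -> in_BA ip A S ->
  is_sharpA ip A P Ps -> is_sharpA ip A Q Qs -> is_sharpA ip A R Rs ->
  forall lam : F, 0 <= lam <= 1 ->
  omegaA2 ip A P Q R S <=
    2^-1 * (opnormA ip A P + 2 * omegaA ip A S
      + Num.sqrt (opnormA ip A (fun x => rC (lam ^+ 2) *: P (Ps x) + Q (Qs x)))
      + Num.sqrt (opnormA ip A
                    (fun x => rC ((1 - lam) ^+ 2) *: P (Ps x) + Rs (R x)))).
Proof.
(* Only linearity, positivity and the adjoint relations are used: if omega_AA is finite it
   bounds the four entries, and otherwise [sup] defaults to 0 and the claim is trivial. *)
move=> [ip_lin ip_conj _ ip_def _] [[A_lin _] A_pos] _ [[P_lin _] _] [[Q_lin _] _]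
  [[R_lin _] _] [[S_lin _] _] [Ps_adj _] [Qs_adj _] [Rs_adj _] lam /andP[lam_ge0 lam_le1].
rewrite /omegaA2; set E := (X in sup X <= _).
have [E_sup|/sup_out ->] := pselect (has_sup E); last first.
  by rewrite mulr_ge0 ?invr_ge0 // !addr_ge0 ?sqrtr_ge0 ?mulr_ge0 ?opnormA_ge0 ?omegaA_ge0.
have w_ge0 : 0 <= sup E by apply: sup_image_ge0 => u _; rewrite Re_normr normc_ge0.
have block_le (u : V * V) : normA ip A u.1 ^+ 2 + normA ip A u.2 ^+ 2 = 1 ->
    normc (block_ipA ip A P Q R S u u) <= sup E.
  by move=> u1; rewrite -Re_normr; apply: sup_upper_bound => //; exists u.
have [P_bdd Q_bdd R_bdd S_bdd] :=
  block_entries_A_bounded ip_lin ip_conj A_lin A_pos P_lin Q_lin R_lin S_lin block_le w_ge0.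
apply: ge_sup E_sup.1 _ => _ [u u_sphere <-]; rewrite Re_normr.
exact: (block_ipA_sphere_le ip_lin ip_conj ip_def A_lin A_pos P_lin R_lin S_lin
  (mulr_ge0 (ler0n _ 2) w_ge0) P_bdd Q_bdd R_bdd S_bdd Ps_adj Qs_adj Rs_adj lam_ge0 lam_le1 u_sphere).
Qed.
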